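(* Let $u$ and $v$ be Laurent polynomials with symmetry such that $vv^\star$ divides $uu^\star$. Then there exists a Laurent polynomial $d$ with symmetry such that $$d\,d^\star=\frac{uu^\star}{vv^\star}.$$ Furthermore, for every Laurent polynomial $d$ with symmetry satisfying this identity, there exists $k\in\mathbb Z$ such that $\mathrm{S}d(z)=z^{2k}\,\mathrm{S}u(z)/\mathrm{S}v(z)$.
   Context: Laurent polynomial $u(z)=\sum_ku(k)z^k$ with finitely many nonzero complex coefficients; $u^\star(z):=\sum_k\overline{u(k)}z^{-k}$. $u$ has symmetry of type $\epsilon z^c$ ($\epsilon\in\{\pm1\},c\in\mathbb Z$) if $u(z)=\epsilon z^cu(z^{-1})$; for nonzero $u$, $\mathrm{S}u(z):=u(z)/u(z^{-1})$; the zero polynomial has symmetry of every type. *)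

From HB Require Import structures.
From mathcomp Require Import all_boot all_order all_algebra.
From mathcomp Require Import finmap.
Set Implicit Arguments. Unset Strict Implicit. Unset Printing Implicit Defensive.
Import Order.TTheory GRing.Theory Num.Theory.
Local Open Scope ring_scope.
Local Open Scope fset_scope.

(* The complex numbers are modelled by an arbitrary numClosedFieldType C
   (algebraically closed field with complex conjugation x^* ), which
   includes the complex numbers.                                         *)

(* A Laurent polynomial u(z) = sum_k u(k) z^k : a finitely supported
   coefficient function int -> C (default value 0).                      *)
Definition lpoly (C : numClosedFieldType) := fsfun (fun _ : int => 0 : C).

Section Laurent.
Variable C : numClosedFieldType.
Implicit Types u v : lpoly C.

Definition lpmul u v : lpoly C :=
  [fsfun k in [fset (i + j)%R | i in finsupp u, j in finsupp v] =>
     \sum_(i <- finsupp u) u i * v (k - i)%R].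

(* u^star (z) = sum_k conj(u(k)) z^{-k} *)
Definition lpstar u : lpoly C :=
  [fsfun k in [fset (- i)%R | i in finsupp u] => (u (- k)%R)^*].

(* u(z^{-1}) = sum_k u(k) z^{-k} *)
Definition lprev u : lpoly C :=
  [fsfun k in [fset (- i)%R | i in finsupp u] => u (- k)%R].

Definition lp0 : lpoly C := [fsfun].

Definition lpmono (c : C) (n : int) : lpoly C :=
  [fsfun k in [fset n] => c].

Definition lp_sym_type u (eps : C) (c : int) : Prop :=
  u = lpmul (lpmono eps c) (lprev u).

Definition lp_has_sym u : Prop :=
  exists (eps : C) (c : int), (eps = 1 \/ eps = -1) /\ lp_sym_type u eps c.

End Laurent.

From HB Require Import structures.
From mathcomp Require Import all_boot all_order all_algebra.
From mathcomp Require Import finmap.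
From mathcomp Require Import zify ring.
Import Order.TTheory GRing.Theory Num.Theory.
Local Open Scope ring_scope.
Set Implicit Arguments. Unset Strict Implicit. Unset Printing Implicit Defensive.

(* Evaluating at z <> 0 turns a nonzero Laurent polynomial into
   l z^n prod_(r in R) (z - r) with 0 \notin R, and this factorisation is unique.
   A symmetry u(z) = eps z^c u(1/z) forces the root multiset R to be closed under
   inversion, and then eps = (-1)^(multiplicity of 1 in R) and c = 2n + #R, since
   the other roots pair off as r, 1/r.  The roots of u u^star are R + tau(R) with
   tau r = 1/conj r, so the roots W of w = uu^star/vv^star form a multiset invariant
   under inversion and tau, with even multiplicity wherever the orbit
   {x, 1/x, tau x, 1/tau x} collapses.  Such a W splits as D + tau(D) with D closed
   under inversion, and d = (|l_u|/|l_v|) prod_(r in D) (z - r) is a symmetric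
   solution.  Conversely, for a symmetric d with dd^star = w, comparing roots in
   uu^star = vv^star dd^star shows that the number of roots of u, and the
   multiplicity of its root 1, are the sums of those of v and d; by the formulas
   for eps and c this is Sd = z^(2k) Su/Sv. *)

Section Evaluation.
Context {C : numClosedFieldType}.
Implicit Types (u v : lpoly C) (z : C).

Definition lpeval u z : C := \sum_(k <- finsupp u) u k * z ^ k.

Lemma lpevalE u z (s : seq int) : uniq s -> {subset finsupp u <= s} ->
  lpeval u z = \sum_(k <- s) u k * z ^ k.
Proof.
move=> s_uniq sub_s; rewrite /lpeval [RHS](bigID (mem (finsupp u))) /=.
rewrite [X in _ + X]big1 ?addr0; last by move=> k /fsfun_dflt ->; rewrite mul0r.
rewrite -[RHS]big_filter; apply/perm_big/uniq_perm; rewrite ?filter_uniq ?fset_uniq //.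
by move=> k; rewrite mem_filter; case: (boolP (k \in finsupp u)) => //= ku; rewrite sub_s.
Qed.

Lemma mem_finsupp_fsfun (S : {fset int}) (h : int -> C) k :
  k \in finsupp ([fsfun x in S => h x] : lpoly C) -> k \in S.
Proof. by rewrite mem_finsupp fsfunE; case: ifP => // _; rewrite eqxx. Qed.

Lemma lpeval0 z : lpeval (lp0 C) z = 0.
Proof.
by rewrite (@lpevalE _ _ [::]) ?big_nil // => k; rewrite mem_finsupp fsfunE eqxx.
Qed.

Lemma lpeval_mono c n z : lpeval (lpmono c n) z = c * z ^ n.
Proof.
rewrite (@lpevalE _ _ [:: n]) // ?big_seq1 /lpmono ?fsfunE ?inE ?eqxx //.
by move=> k /mem_finsupp_fsfun; rewrite inE mem_seq1.
Qed.

Lemma finsupp_opp_fsfun u (h : int -> C) :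
  {subset finsupp ([fsfun k in [fset - i | i in finsupp u]%fset => h k] : lpoly C)
   <= [seq - i | i <- finsupp u]}.
Proof. by move=> k /mem_finsupp_fsfun /imfsetP [i /= iu ->]; rewrite map_f. Qed.

Lemma uniq_map_opp u : uniq [seq - i | i <- finsupp u].
Proof. by rewrite map_inj_uniq ?fset_uniq //; apply: oppr_inj. Qed.

Lemma lpeval_rev u z : lpeval (lprev u) z = lpeval u z^-1.
Proof.
rewrite (lpevalE _ (uniq_map_opp u)) ?big_map; last exact: finsupp_opp_fsfun.
apply: eq_big_seq => i iu.
by rewrite /lprev fsfunE in_imfset //= opprK exprz_inv.
Qed.

Lemma lpeval_star u z : lpeval (lpstar u) z = (lpeval u (z^*)^-1)^*.
Proof.
rewrite (lpevalE _ (uniq_map_opp u)) ?big_map; last exact: finsupp_opp_fsfun.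
rewrite rmorph_sum; apply: eq_big_seq => i iu.
rewrite /lpstar fsfunE in_imfset //= opprK rmorphM /=.
by rewrite fmorphXz fmorphV /= conjCK exprz_inv.
Qed.

Lemma lpevalM u v z : z != 0 -> lpeval (lpmul u v) z = lpeval u z * lpeval v z.
Proof.
move=> z0; set S := [fset (i + j)%R | i in finsupp u, j in finsupp v]%fset.
have supp_uv : {subset finsupp (lpmul u v) <= S} by move=> k; apply: mem_finsupp_fsfun.
rewrite (lpevalE _ (fset_uniq S) supp_uv).
rewrite (eq_big_seq (fun k =>
  \sum_(i <- finsupp u) u i * z ^ i * (v (k - i) * z ^ (k - i)))); last first.
  move=> k kS; rewrite /lpmul fsfunE kS mulr_suml; apply: eq_bigr => i _.
  by rewrite mulrACA -expfzDr // [i + _]addrC subrK.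
rewrite (exchange_big_dep xpredT) //= /lpeval mulr_suml.
apply: eq_big_seq => i iu; rewrite -mulr_sumr; congr (_ * _).
rewrite -(big_map (fun k => k - i) predT (fun j => v j * z ^ j)) -lpevalE //.
  by rewrite map_inj_uniq ?fset_uniq //; apply: addIr.
move=> j jv; apply/mapP; exists (i + j); last by rewrite addrC addKr.
by apply/imfset2P; exists i => //; exists j.
Qed.

Definition lpbound u : nat := (\max_(k <- finsupp u) `|k|.+1)%N.

Lemma lpbound_gt u k : k \in finsupp u -> (`|k| < lpbound u)%N.
Proof. by move=> ku; rewrite /lpbound (leq_bigmax_seq k). Qed.

(* z^N u(z), a polynomial as soon as N >= lpbound u *)
Definition lpshift (N : nat) u : {poly C} := \poly_(i < N + N) u (i%:Z - N%:Z).

Lemma lpshift_horner N u z : (lpbound u <= N)%N -> z != 0 ->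
  (lpshift N u).[z] = z ^ N%:Z * lpeval u z.
Proof.
move=> uN z0; rewrite horner_poly.
rewrite (@lpevalE _ _ [seq i%:Z - N%:Z | i <- iota 0 (N + N)]); first last.
- move=> k /lpbound_gt kN; apply/mapP; exists `|(k + N%:Z)%R|%N; last by lia.
  by rewrite mem_iota; lia.
- by rewrite map_inj_uniq ?iota_uniq // => i j /addIr [].
rewrite big_map mulr_sumr -(big_mkord xpredT (fun i => u (i%:Z - N%:Z) * z ^+ i)).
rewrite /index_iota subn0; apply: eq_bigr => i _; rewrite mulrCA -expfzDr //.
by rewrite (_ : N%:Z + (i%:Z - N%:Z) = i%:Z) //; lia.
Qed.

Lemma lpbound_dflt N u k : (lpbound u <= N)%N -> (N <= `|k|)%N -> u k = 0.
Proof.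
move=> uN kN; apply: fsfun_dflt; apply: contraTN kN => /lpbound_gt ltk.
by rewrite -ltnNge (leq_trans ltk uN).
Qed.

Lemma coef_lpshift N u k : (`|k| < N)%N -> (lpshift N u)`_`|(k + N%:Z)%R|%N = u k.
Proof. by move=> kN; rewrite coef_poly ifT; [congr (u _) | ]; lia. Qed.

Lemma lpshift_eq0 N u : (lpbound u <= N)%N -> lpshift N u = 0 -> u = lp0 C.
Proof.
move=> uN u0; apply/fsfunP => k; rewrite [RHS]fsfunE.
have [kN|kN] := leqP N `|k|; first exact: lpbound_dflt kN.
by rewrite -(coef_lpshift _ kN) u0 coef0.
Qed.

Lemma poly_eq0_nonzero (p : {poly C}) : (forall z, z != 0 -> p.[z] = 0) -> p = 0.
Proof.
move=> p0; apply: (@roots_geq_poly_eq0 _ p [seq i.+1%:R | i <- iota 0 (size p)]).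
- by apply/allP => _ /mapP [i _ ->]; apply/eqP/p0; rewrite pnatr_eq0.
- by rewrite map_inj_uniq ?iota_uniq // => i j /eqP; rewrite eqr_nat eqSS => /eqP.
- by rewrite size_map size_iota.
Qed.

Lemma lpeval_inj u v : (forall z, z != 0 -> lpeval u z = lpeval v z) -> u = v.
Proof.
move=> euv; set N := maxn (lpbound u) (lpbound v).
have uN : (lpbound u <= N)%N by rewrite leq_maxl.
have vN : (lpbound v <= N)%N by rewrite leq_maxr.
have shift_eq : lpshift N u = lpshift N v.
  apply/eqP; rewrite -subr_eq0; apply/eqP/poly_eq0_nonzero => z z0.
  by rewrite hornerD hornerN !lpshift_horner // euv // subrr.
apply/fsfunP => k; have [kN|kN] := leqP N `|k|; first by rewrite !(lpbound_dflt _ kN).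
by rewrite -!(coef_lpshift _ kN) shift_eq.
Qed.

Lemma lpeval_eq0 u : (forall z, z != 0 -> lpeval u z = 0) -> u = lp0 C.
Proof. by move=> u0; apply: lpeval_inj => z z0; rewrite u0 // lpeval0. Qed.

Lemma lpmulr0 u : lpmul u (lp0 C) = lp0 C.
Proof. by apply: lpeval_eq0 => z z0; rewrite lpevalM // lpeval0 mulr0. Qed.

Lemma lpmul0r u : lpmul (lp0 C) u = lp0 C.
Proof. by apply: lpeval_eq0 => z z0; rewrite lpevalM // lpeval0 mul0r. Qed.

Definition lpoly_of_poly (p : {poly C}) : lpoly C :=
  [fsfun k in [fset i%:Z | i in iota 0 (size p)]%fset => p`_`|k|%N].

Lemma lpeval_poly p z : lpeval (lpoly_of_poly p) z = p.[z].
Proof.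
rewrite (@lpevalE _ _ [seq i%:Z | i <- iota 0 (size p)]); first last.
- move=> k; rewrite /lpoly_of_poly => /mem_finsupp_fsfun /imfsetP [i /= ip ->].
  by rewrite map_f.
- by rewrite map_inj_uniq ?iota_uniq // => i j [].
rewrite big_map horner_coef -(big_mkord xpredT (fun i => p`_i * z ^+ i)).
rewrite /index_iota subn0; apply: eq_big_seq => i ip.
by rewrite /lpoly_of_poly fsfunE in_imfset.
Qed.

End Evaluation.

Section RootMultisets.
Context {C : numClosedFieldType}.
Implicit Types (x y : C) (R W : seq C).

(* Reflection in the unit circle: the roots of u^star are the tau-images of
   those of u. *)
Definition tau x : C := (x^*)^-1.

Lemma tauK : involutive tau.
Proof. by move=> x; rewrite /tau fmorphV /= conjCK invrK. Qed.

Lemma tauV x : tau x^-1 = (tau x)^-1.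
Proof. by rewrite /tau fmorphV. Qed.

Lemma tau1 : tau 1 = 1.
Proof. by rewrite /tau rmorph1 invr1. Qed.

Lemma tau_eq0 x : (tau x == 0) = (x == 0).
Proof. by rewrite /tau invr_eq0 conjC_eq0. Qed.

Lemma invr_fixed x : x != 0 -> (x^-1 == x) = (x == 1) || (x == -1).
Proof.
move=> x0; rewrite -sqrf_eq1; apply/eqP/eqP => [xVx | x2].
  by rewrite expr2 -{1}xVx mulVf.
by apply: (mulfI x0); rewrite divff // -expr2 x2.
Qed.

Lemma tau_inv_fixed x : x^-1 = x -> tau x = x.
Proof.
have [-> _|x0 /eqP] := eqVneq x 0; first by rewrite /tau conjC0 invr0.
rewrite invr_fixed // /tau => /orP [] /eqP ->.
  by rewrite rmorph1 invr1.
by rewrite rmorphN1 invrN1.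
Qed.

Lemma inv_eq x y : (x^-1 == y) = (x == y^-1).
Proof. exact: (can2_eq invrK invrK). Qed.

Lemma tau_eq x y : (tau x == y) = (x == tau y).
Proof. exact: (can2_eq tauK tauK). Qed.

Lemma count_map_tau y R : count_mem y (map tau R) = count_mem (tau y) R.
Proof. by rewrite count_map; apply: eq_count => x /=; rewrite tau_eq. Qed.

Lemma count_map_inv y R : count_mem y (map GRing.inv R) = count_mem y^-1 R.
Proof. by rewrite count_map; apply: eq_count => x /=; rewrite inv_eq. Qed.

Definition stable (f : C -> C) R := forall x, count_mem (f x) R = count_mem x R.

Lemma stable_cat f R W : stable f R -> stable f W -> stable f (R ++ W).
Proof. by move=> sR sW x; rewrite !count_cat sR sW. Qed.

Lemma stable_catr f R X W :
  perm_eq R (X ++ W) -> stable f R -> stable f X -> stable f W.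
Proof.
by move=> pR sR sX x; move: (sR x); rewrite !(permP pR) !count_cat sX => /addnI.
Qed.

Lemma stable_mem f R x : stable f R -> x \in R -> f x \in R.
Proof. by move=> sR; rewrite -!has_pred1 !has_count sR. Qed.

Lemma stable_invE R : stable GRing.inv R <-> perm_eq R (map GRing.inv R).
Proof.
split=> [sR | /permP pR x]; last by rewrite pR count_map_inv invrK.
by apply/allP => x _; rewrite /= count_map_inv sR.
Qed.

Definition root_sign R : C := (-1) ^+ count_mem 1 R.

Lemma root_signK R : root_sign R * root_sign R = 1.
Proof. by rewrite -[RHS](signrMK (count_mem 1 R)) mulr1. Qed.

Lemma root_sign_pm R : root_sign R = 1 \/ root_sign R = -1.
Proof. by rewrite /root_sign -signr_odd; case: odd; [right | left]. Qed.

(* The roots other than 1 and -1 pair off as r, r^-1, with (-r) (-r^-1) = 1. *)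
Lemma prodN_stable_inv R :
  0 \notin R -> stable GRing.inv R -> \prod_(r <- R) (- r) = root_sign R.
Proof.
elim: {R}_.+1 {-2}R (ltnSn (size R)) => // n IH [|r R]; first by rewrite big_nil.
rewrite ltnS in_cons negb_or eq_sym => /= sizeR /andP [r0 R0] sR.
have stable_tail : r^-1 = r -> stable GRing.inv R.
  move=> rVr; apply: (@stable_catr _ (r :: R) [:: r]) => // x /=.
  by rewrite -{1}rVr (inj_eq invr_inj).
have [r1|r1] := eqVneq r 1.
  have sR' : stable GRing.inv R by apply: stable_tail; rewrite r1 invr1.
  by rewrite big_cons IH // r1 /root_sign /= eqxx add1n exprS.
have [rN1|rN1] := eqVneq r (-1).
  have sR' : stable GRing.inv R by apply: stable_tail; rewrite rN1 invrN1.
  have N1 : (-1 == 1 :> C) = false by rewrite -rN1 (negbTE r1).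
  by rewrite big_cons IH // rN1 opprK mul1r /root_sign /= N1.
have rVr : r^-1 != r by rewrite invr_fixed // negb_or r1.
have rVR : r^-1 \in R.
  by move: (stable_mem sR (mem_head r R)); rewrite in_cons (negbTE rVr).
have pR := perm_to_rem rVR; set R' := rem r^-1 R in pR.
have sR' : stable GRing.inv R'.
  apply: (@stable_catr _ (r :: R) [:: r; r^-1]); rewrite ?perm_cons //.
  by move=> x /=; rewrite !addn0 (inj_eq invr_inj) -inv_eq addnC.
rewrite big_cons (perm_big _ pR) big_cons IH //; first last.
- by apply: contra R0; rewrite (perm_mem pR) in_cons => ->; rewrite orbT.
- by move: sizeR; rewrite (perm_size pR) /=; lia.
by rewrite mulrA mulrNN divff // mul1r /root_sign /= (permP pR) /= invr_eq1 (negbTE r1).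
Qed.

(* The orbit of x under inversion and tau has at most two points: x lies on the
   unit circle or on the real line. *)
Definition short_orbit x := (tau x == x) || (tau x == x^-1).

Definition even_short W := forall x, short_orbit x -> ~~ odd (count_mem x W).

Lemma stable_tau_double R : stable tau (R ++ map tau R).
Proof. by move=> y; rewrite !count_cat !count_map_tau tauK addnC. Qed.

Lemma stable_inv_double R :
  stable GRing.inv R -> stable GRing.inv (R ++ map tau R).
Proof. by move=> sR y; rewrite !count_cat !count_map_tau tauV sR sR. Qed.

Lemma even_short_double R : stable GRing.inv R -> even_short (R ++ map tau R).
Proof.
move=> sR y /orP [] /eqP ty.
  by rewrite count_cat count_map_tau ty addnn odd_double.
by rewrite count_cat count_map_tau ty sR addnn odd_double.
Qed.

Lemma even_short_catr R X W :
  perm_eq R (X ++ W) -> even_short R -> even_short X -> even_short W.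
Proof.
move=> pR eR eX y sy; move: (eR y sy) (eX y sy).
by rewrite (permP pR) count_cat oddD; case: odd; case: odd.
Qed.

Lemma perm_cat_count_le X W : (forall y, count_mem y X <= count_mem y W)%N ->
  exists W', perm_eq W (X ++ W').
Proof.
case/count_subseqP => s /perm_to_subseq [W' pW] pX; exists W'.
by rewrite (perm_trans pW) // perm_cat2r perm_sym.
Qed.

Lemma uniq_long_orbit x : x^-1 != x -> ~~ short_orbit x ->
  uniq ([:: x; x^-1] ++ map tau [:: x; x^-1]).
Proof.
rewrite /short_orbit negb_or => xVx /andP [tx_x tx_xV].
have e0 : x != x^-1 by rewrite eq_sym.
have e1 : x != tau x by rewrite eq_sym.
have e2 : x != (tau x)^-1 by rewrite -inv_eq eq_sym.
have e3 : x^-1 != tau x by rewrite eq_sym.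
have e4 : x^-1 != (tau x)^-1 by rewrite (inj_eq invr_inj).
have e5 : tau x != (tau x)^-1 by rewrite -tauV (inj_eq (can_inj tauK)).
by rewrite /= !inE !negb_or tauV e0 e1 e2 e3 e4 e5.
Qed.

(* Peel off x, x^-1 and their tau-images; on a short orbit these coincide in
   pairs, and the even multiplicity provides the second copy. *)
Lemma tau_split_step W x : x \in W ->
  stable GRing.inv W -> stable tau W -> even_short W ->
  exists2 D, D != [::] & stable GRing.inv D /\
    (forall y, count_mem y (D ++ map tau D) <= count_mem y W)%N.
Proof.
move=> xW sW tW eW.
have x2W : short_orbit x -> (1 < count_mem x W)%N.
  by move=> /eW; move: xW; rewrite -has_pred1 has_count; case: (count_mem x W) => [|[]].
have [xVx|xVx] := eqVneq x^-1 x.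
  have tx := tau_inv_fixed xVx.
  exists [:: x] => //; split=> y /=; first by rewrite -inv_eq xVx.
  rewrite tx; case: eqP => // <-; apply: x2W.
  by rewrite /short_orbit tx eqxx.
have sD : stable GRing.inv [:: x; x^-1].
  by move=> y /=; rewrite !addn0 (inj_eq invr_inj) -inv_eq addnC.
exists [:: x; x^-1] => //; split=> //.
have [sx|sx] := boolP (short_orbit x).
  have pX : perm_eq ([:: x; x^-1] ++ map tau [:: x; x^-1]) [:: x; x; x^-1; x^-1].
    by case/orP: sx => /eqP tx; rewrite /= tauV tx ?invrK; apply/permP => p /=; lia.
  move=> y; rewrite (permP pX) /=.
  have [<-|_] := eqVneq x y; first by rewrite (negbTE xVx) x2W.
  have [<-|_] := eqVneq x^-1 y => //.
  by rewrite sW x2W.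
apply: leq_uniq_count (uniq_long_orbit xVx sx) _ => y.
rewrite /= !inE => /or4P [] /eqP ->.
- exact: xW.
- exact: stable_mem sW xW.
- exact: stable_mem tW xW.
- exact: stable_mem tW (stable_mem sW xW).
Qed.

Lemma tau_split W : stable GRing.inv W -> stable tau W -> even_short W ->
  exists2 D, stable GRing.inv D & perm_eq W (D ++ map tau D).
Proof.
elim: {W}_.+1 {-2}W (ltnSn (size W)) => // n IH [|x W] sizeW sW tW eW.
  by exists [::].
have [D0 D00 [sD0 D0W]] := tau_split_step (mem_head x W) sW tW eW.
have [W' pW] := perm_cat_count_le D0W.
have [D' sD' pD'] : exists2 D', stable GRing.inv D' & perm_eq W' (D' ++ map tau D').
  apply: IH.
  - by move: sizeW D00; rewrite (perm_size pW) -size_eq0 !size_cat size_map /=; lia.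
  - exact: stable_catr pW sW (stable_inv_double sD0).
  - exact: stable_catr pW tW (stable_tau_double D0).
  - exact: even_short_catr pW eW (even_short_double sD0).
exists (D0 ++ D'); first exact: stable_cat.
apply/permP => p; rewrite (permP pW) !count_cat (permP pD') map_cat !count_cat; lia.
Qed.

Lemma tau_split_cancel A B W : stable GRing.inv A -> stable GRing.inv B ->
  perm_eq (A ++ map tau A) ((B ++ map tau B) ++ W) ->
  exists2 D, stable GRing.inv D & perm_eq W (D ++ map tau D).
Proof.
move=> sA sB pW; apply: tau_split.
- exact: stable_catr pW (stable_inv_double sA) (stable_inv_double sB).
- exact: stable_catr pW (stable_tau_double A) (stable_tau_double B).
- exact: even_short_catr pW (even_short_double sA) (even_short_double sB).
Qed.

Lemma perm_tau_double A B D :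
  perm_eq (A ++ map tau A) ((B ++ map tau B) ++ (D ++ map tau D)) ->
  size A = (size B + size D)%N /\ root_sign A = root_sign B * root_sign D.
Proof.
move=> pA; split.
  by move: (perm_size pA); rewrite !size_cat !size_map !addnn -doubleD => /double_inj.
move: (permP pA (pred1 1)); rewrite !count_cat !count_map_tau tau1 !addnn -doubleD.
by rewrite /root_sign -exprD => /double_inj ->.
Qed.

End RootMultisets.

Section Factorisation.
Context {C : numClosedFieldType}.
Implicit Types (u v : lpoly C) (z l : C) (n : int) (R : seq C).

Definition factored l n R z : C := l * z ^ n * \prod_(r <- R) (z - r).

Definition lp_factors u l n R : Prop :=
  [/\ l != 0, 0 \notin R & forall z, z != 0 -> lpeval u z = factored l n R z].

Lemma factoredM l1 l2 n1 n2 R1 R2 z : z != 0 ->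
  factored l1 n1 R1 z * factored l2 n2 R2 z = factored (l1 * l2) (n1 + n2) (R1 ++ R2) z.
Proof. by move=> z0; rewrite /factored expfzDr // big_cat /=; ring. Qed.

Lemma prod_subr_nseq0 (a : nat) z : \prod_(r <- nseq a 0) (z - r) = z ^+ a.
Proof. by elim: a => [|a IH]; rewrite ?big_nil // big_cons IH subr0 exprS. Qed.

Lemma prod_subr_split0 R z :
  \prod_(r <- R) (z - r) =
  z ^+ count_mem 0 R * \prod_(r <- [seq r <- R | r != 0]) (z - r).
Proof.
elim: R => [|r R IH]; first by rewrite !big_nil mulr1.
rewrite big_cons IH /=; have [->|r0] := eqVneq r 0; first by rewrite subr0 exprS mulrA.
by rewrite big_cons mulrCA.
Qed.

Lemma horner_factored l (a : nat) R z :
  (l *: \prod_(r <- nseq a 0 ++ R) ('X - r%:P)).[z] = factored l a R z.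
Proof.
rewrite hornerZ horner_prod; under eq_bigr do rewrite hornerXsubC.
by rewrite big_cat /= prod_subr_nseq0 mulrA.
Qed.

(* Multiplying by a large power of z reduces this to unique factorisation of
   polynomials; the leading coefficients show that l2 <> 0 need not be assumed. *)
Lemma factored_unique l1 l2 n1 n2 R1 R2 : l1 != 0 -> 0 \notin R1 -> 0 \notin R2 ->
  (forall z, z != 0 -> factored l1 n1 R1 z = factored l2 n2 R2 z) ->
  [/\ l1 = l2, n1 = n2 & perm_eq R1 R2].
Proof.
move=> l10 R10 R20 eq12; set M : nat := (`|n1| + `|n2|)%N.
set a1 : nat := `|(n1 + M%:Z)%R|%N; set a2 : nat := `|(n2 + M%:Z)%R|%N.
have ea1 : n1 + M%:Z = a1%:Z by lia.
have ea2 : n2 + M%:Z = a2%:Z by lia.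
have shift n a : n + M%:Z = a%:Z -> forall l R z, z != 0 ->
    factored l a R z = factored l n R z * z ^ M%:Z.
  by move=> <- l R z z0; rewrite /factored expfzDr //; ring.
set p1 := l1 *: \prod_(r <- nseq a1 0 ++ R1) ('X - r%:P).
set p2 := l2 *: \prod_(r <- nseq a2 0 ++ R2) ('X - r%:P).
have p12 : p1 = p2.
  apply/eqP; rewrite -subr_eq0; apply/eqP/poly_eq0_nonzero => z z0.
  rewrite hornerD hornerN !horner_factored.
  by rewrite (shift _ _ ea1) ?(shift _ _ ea2) // eq12 // subrr.
have l12 : l1 = l2.
  move: (congr1 lead_coef p12).
  by rewrite !lead_coefZ !(monicP (monic_prod_XsubC _ _ _)) !mulr1.
move: p12; rewrite /p1 /p2 -l12 => /(scalerI l10) /prod_XsubC_eq pe.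
have a12 : a1 = a2.
  move: (permP pe (pred1 0)); rewrite !count_cat !count_nseq /= eqxx !mul1n.
  by rewrite !(count_memPn _) // !addn0.
split=> //; last by move: pe; rewrite a12 perm_cat2l.
by apply: (@addIr _ M%:Z); rewrite ea1 ea2 a12.
Qed.

Lemma lpoly_factor u : u <> lp0 C -> exists l n R, lp_factors u l n R.
Proof.
move=> u0; set N := lpbound u; set P := lpshift N u.
have P0 : P != 0 by apply/eqP => /(lpshift_eq0 (leqnn N)).
have [rs Prs] := closed_field_poly_normal P.
exists (lead_coef P), ((count_mem 0 rs)%:Z - N%:Z), [seq r <- rs | r != 0].
split=> [||z z0]; first by rewrite lead_coef_eq0.
  by rewrite mem_filter eqxx.
have := lpshift_horner (leqnn N) z0; rewrite -/P {1}Prs hornerZ horner_prod.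
under eq_bigr do rewrite hornerXsubC.
rewrite prod_subr_split0 => PE.
have -> : lpeval u z = z ^ (- N%:Z) * (z ^ N%:Z * lpeval u z).
  by rewrite mulrA -expfzDr // addNr expr0z mul1r.
rewrite -PE /factored expfzDr // (_ : z ^ (count_mem 0 rs)%:Z = z ^+ count_mem 0 rs) //.
ring.
Qed.

Lemma lp_factorsM u v l1 l2 n1 n2 R1 R2 :
  lp_factors u l1 n1 R1 -> lp_factors v l2 n2 R2 ->
  lp_factors (lpmul u v) (l1 * l2) (n1 + n2) (R1 ++ R2).
Proof.
move=> [l10 R10 fu] [l20 R20 fv]; split=> [||z z0]; first exact: mulf_neq0.
  by rewrite mem_cat negb_or R10.
by rewrite lpevalM // fu // fv // factoredM.
Qed.

Lemma lp_factors_perm u l n R R' :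
  lp_factors u l n R -> perm_eq R R' -> lp_factors u l n R'.
Proof.
move=> [l0 R0 fu] pR; split=> [||z z0]; first by [].
  by rewrite -(perm_mem pR).
by rewrite fu // /factored (perm_big _ pR).
Qed.

Lemma lp_factors_inj u v l n R : lp_factors u l n R -> lp_factors v l n R -> u = v.
Proof. by move=> [_ _ fu] [_ _ fv]; apply: lpeval_inj => z z0; rewrite fu // fv. Qed.

Lemma lp_factors_unique u l1 l2 n1 n2 R1 R2 :
  lp_factors u l1 n1 R1 -> lp_factors u l2 n2 R2 ->
  [/\ l1 = l2, n1 = n2 & perm_eq R1 R2].
Proof.
move=> [l10 R10 fu1] [_ R20 fu2]; apply: factored_unique => // z z0.
by rewrite -fu1 // fu2.
Qed.

Lemma lp_factors_neq0 u l n R : lp_factors u l n R -> u <> lp0 C.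
Proof.
move=> [l0 R0 fu] u0; case: (@factored_unique l 0 n n R R) => // [z z0 | l_0].
  by rewrite -fu // u0 lpeval0 /factored !mul0r.
by rewrite l_0 eqxx in l0.
Qed.

Lemma map_notin0 (f : C -> C) R :
  (forall x, (f x == 0) = (x == 0)) -> 0 \notin R -> 0 \notin map f R.
Proof.
move=> f0 R0; apply/mapP => -[r rR /esym/eqP]; rewrite f0 => /eqP r0.
by rewrite -r0 rR in R0.
Qed.

Lemma prod_subr_inv R z : 0 \notin R -> z != 0 ->
  \prod_(r <- R) (z^-1 - r) =
  z^-1 ^+ size R * \prod_(r <- R) (- r) * \prod_(r <- map GRing.inv R) (z - r).
Proof.
move=> R0 z0; elim: R R0 => [|r R IH]; first by rewrite !big_nil !mulr1.
rewrite in_cons negb_or eq_sym => /andP [r0 R0]; rewrite /= !big_cons IH //.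
have -> : z^-1 - r = z^-1 * (- r) * (z - r^-1) by field; apply/andP.
by rewrite exprS; ring.
Qed.

Lemma factoredV l n R z : 0 \notin R -> z != 0 ->
  factored l n R z^-1 =
  factored (l * \prod_(r <- R) (- r)) (- n - (size R)%:Z) (map GRing.inv R) z.
Proof.
move=> R0 z0; rewrite /factored prod_subr_inv // expfzDr // -!exprz_inv.
by rewrite (_ : z^-1 ^ (size R)%:Z = z^-1 ^+ size R) //; ring.
Qed.

Lemma lpeval_sym u eps c z : lp_sym_type u eps c -> z != 0 ->
  lpeval u z = eps * z ^ c * lpeval u z^-1.
Proof. by move=> su z0; rewrite {1}su lpevalM // lpeval_mono lpeval_rev. Qed.

Lemma lp_sym_factors u eps c l n R : lp_factors u l n R -> lp_sym_type u eps c ->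
  [/\ stable GRing.inv R, eps = root_sign R & c = (2 * n + (size R)%:Z)%R].
Proof.
move=> [l0 R0 fu] su.
have [el en pR] : [/\ l = eps * l * \prod_(r <- R) (- r),
    n = c + (- n - (size R)%:Z) & perm_eq R (map GRing.inv R)].
  apply: factored_unique => // [|z z0].
    by apply: map_notin0 => // x; rewrite invr_eq0.
  rewrite -fu // (lpeval_sym su z0) fu ?invr_neq0 // factoredV // /factored !expfzDr //.
  by ring.
have sR : stable GRing.inv R by apply/stable_invE.
split=> //; last by lia.
have : eps * root_sign R = 1.
  by rewrite -prodN_stable_inv //; apply: (mulIf l0); rewrite mul1r mulrAC -el.
by move=> epsR; rewrite -[eps]mulr1 -(root_signK R) mulrA epsR mul1r.
Qed.


Lemma lp_factors_sym u l n R : lp_factors u l n R -> stable GRing.inv R ->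
  lp_sym_type u (root_sign R) (2 * n + (size R)%:Z).
Proof.
move=> [l0 R0 fu] sR; apply: lpeval_inj => z z0.
rewrite lpevalM // lpeval_mono lpeval_rev fu // fu ?invr_neq0 // factoredV //.
rewrite prodN_stable_inv // /factored -(perm_big _ (proj1 (stable_invE R) sR)).
have -> : z ^ n = z ^ (2 * n + (size R)%:Z) * z ^ (- n - (size R)%:Z).
  by rewrite -expfzDr //; congr (_ ^ _); lia.
by rewrite -{1}[l]mul1r -(root_signK R); ring.
Qed.

Lemma conj_factored l n R y :
  (factored l n R y)^* = factored l^* n (map (fun r => r^*) R) y^*.
Proof.
rewrite /factored !rmorphM /= fmorphXz rmorph_prod big_map.
by congr (_ * _); apply: eq_bigr => r _; rewrite rmorphB.
Qed.

Lemma lp_factors_star u l n R : lp_factors u l n R ->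
  lp_factors (lpstar u) (l^* * \prod_(r <- R) (- r^*)) (- n - (size R)%:Z) (map tau R).
Proof.
move=> [l0 R0 fu]; split=> [||z z0].
- rewrite mulf_neq0 ?conjC_eq0 // prodf_seq_neq0; apply/allP => r rR /=.
  by rewrite oppr_eq0 conjC_eq0; apply: contraNneq R0 => <-.
- by apply: map_notin0 => // x; rewrite tau_eq0.
rewrite lpeval_star fu ?invr_eq0 ?conjC_eq0 // conj_factored fmorphV /= conjCK.
rewrite factoredV // ?big_map ?size_map -?map_comp //.
by apply: map_notin0 => // x; rewrite conjC_eq0.
Qed.

Lemma lp_factors_normsq u l n R : lp_factors u l n R -> stable GRing.inv R ->
  lp_factors (lpmul u (lpstar u)) (`|l| ^+ 2 * root_sign R) (- (size R)%:Z)
    (R ++ map tau R).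
Proof.
move=> fu sR; have R0 : 0 \notin R by case: fu.
have conj_sign : \prod_(r <- R) (- r^*) = root_sign R.
  transitivity ((root_sign R)^*); last by rewrite rmorphXn rmorphN1.
  rewrite -(prodN_stable_inv R0 sR) rmorph_prod.
  by apply: eq_bigr => r _; rewrite rmorphN.
have := lp_factorsM fu (lp_factors_star fu).
by rewrite conj_sign mulrA -normCK addrA subrr add0r.
Qed.

Lemma lp_sym_type_ratio d u v ed eu ev cd cu cv k :
  lp_sym_type d ed cd -> lp_sym_type u eu cu -> lp_sym_type v ev cv ->
  ed = eu * ev -> ev * ev = 1 -> cd + cv = 2 * k + cu ->
  lpmul (lpmul d (lprev u)) v
  = lpmul (lpmono 1 (2 * k)) (lpmul (lpmul (lprev d) u) (lprev v)).
Proof.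
move=> sd su sv edE ev2 cE; apply: lpeval_inj => z z0.
rewrite !lpevalM // !lpeval_rev lpeval_mono.
rewrite (lpeval_sym sd z0) (lpeval_sym sv z0) (lpeval_sym su z0).
have ez : z ^ cd * z ^ cv = z ^ (2 * k) * z ^ cu by rewrite -!expfzDr // cE.
transitivity (ed * ev * (z ^ cd * z ^ cv) *
  (lpeval d z^-1 * lpeval u z^-1 * lpeval v z^-1)); first by ring.
by rewrite ez edE -[eu * ev * ev]mulrA ev2 mulr1; ring.
Qed.

Lemma lp_factors_poly l D : l != 0 -> 0 \notin D ->
  lp_factors (lpoly_of_poly (l *: \prod_(r <- D) ('X - r%:P))) l 0 D.
Proof.
move=> l0 D0; split=> // z _; rewrite lpeval_poly hornerZ horner_prod /factored.
by rewrite expr0z mulr1; under eq_bigr do rewrite hornerXsubC.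
Qed.

Lemma lp_normsq_sym_exists w l D : l != 0 -> stable GRing.inv D ->
  lp_factors w (`|l| ^+ 2 * root_sign D) (- (size D)%:Z) (D ++ map tau D) ->
  exists d, lp_has_sym d /\ lpmul d (lpstar d) = w.
Proof.
move=> l0 sD fw.
have D0 : 0 \notin D by case: fw => _; rewrite mem_cat negb_or => /andP [].
have fd := lp_factors_poly l0 D0.
exists (lpoly_of_poly (l *: \prod_(r <- D) ('X - r%:P))); split.
  exists (root_sign D), (2 * 0 + (size D)%:Z); split; first exact: root_sign_pm.
  exact: lp_factors_sym fd sD.
exact: lp_factors_inj (lp_factors_normsq fd sD) fw.
Qed.

Lemma lp_normsq_div_sym y w (a b : C) A B :
  lp_factors y (`|b| ^+ 2 * root_sign B) (- (size B)%:Z) (B ++ map tau B) ->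
  lp_factors (lpmul y w) (`|a| ^+ 2 * root_sign A) (- (size A)%:Z) (A ++ map tau A) ->
  stable GRing.inv A -> stable GRing.inv B ->
  exists d, lp_has_sym d /\ lpmul d (lpstar d) = w.
Proof.
move=> fy fyw sA sB.
have w0 : w <> lp0 C by move=> w0; apply: (lp_factors_neq0 fyw); rewrite w0 lpmulr0.
have [lw [nw [W fw]]] := lpoly_factor w0.
have [lwE nwE pW] := lp_factors_unique fyw (lp_factorsM fy fw).
have [D sD pD] := tau_split_cancel sA sB pW.
have [sizeA signA] :
    size A = (size B + size D)%N /\ root_sign A = root_sign B * root_sign D.
  by apply: perm_tau_double; rewrite (perm_trans pW) ?perm_cat2l.
have [[yb0 _ _] [ya0 _ _]] := (fy, fyw).
have b0 : `|b| != 0 by apply: contraNneq yb0 => ->; rewrite expr0n mul0r.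
set ld := `|a| / `|b|.
have ld0 : ld != 0.
  by rewrite mulf_neq0 ?invr_eq0 //; apply: contraNneq ya0 => ->; rewrite expr0n mul0r.
apply: (lp_normsq_sym_exists ld0 sD).
rewrite (_ : - (size D)%:Z = nw); last by lia.
suff -> : `|ld| ^+ 2 * root_sign D = lw by apply: lp_factors_perm fw pD.
by apply: (mulfI yb0); rewrite -lwE signA /ld normrM normfV !normr_id; field.
Qed.

End Factorisation.

Theorem lemma3p17 (C : numClosedFieldType) (u v w : lpoly C) :
  u <> lp0 C -> v <> lp0 C ->
  lp_has_sym u -> lp_has_sym v ->
  lpmul u (lpstar u) = lpmul (lpmul v (lpstar v)) w ->
  (exists d : lpoly C, lp_has_sym d /\ lpmul d (lpstar d) = w) /\
  (forall d : lpoly C, lp_has_sym d -> lpmul d (lpstar d) = w ->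
     exists k : int,
       lpmul (lpmul d (lprev u)) v
       = lpmul (lpmono 1 (2 * k)) (lpmul (lpmul (lprev d) u) (lprev v))).
Proof.
move=> u0 v0 [eu [cu [_ su]]] [ev [cv [_ sv]]] uu_vvw.
have [lu [nu [A fu]]] := lpoly_factor u0.
have [lv [nv [B fv]]] := lpoly_factor v0.
have [sA euE cuE] := lp_sym_factors fu su.
have [sB evE cvE] := lp_sym_factors fv sv.
have fvv := lp_factors_normsq fv sB.
have fuu := lp_factors_normsq fu sA; rewrite uu_vvw in fuu.
split; first exact: lp_normsq_div_sym fvv fuu sA sB.
move=> d [ed [cd [_ sd]]] dd_w.
have d0 : d <> lp0 C.
  by move=> d0; apply: (lp_factors_neq0 fuu); rewrite -dd_w d0 lpmul0r lpmulr0.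
have [ld [nd [D fd]]] := lpoly_factor d0.
have [sD edE cdE] := lp_sym_factors fd sd.
rewrite -dd_w in fuu.
have [_ _ pAD] := lp_factors_unique fuu (lp_factorsM fvv (lp_factors_normsq fd sD)).
have [sizeA signA] := perm_tau_double pAD.
exists (nd + nv - nu); apply: lp_sym_type_ratio sd su sv _ _ _.
- by rewrite edE euE evE signA mulrAC root_signK mul1r.
- by rewrite evE root_signK.
- by rewrite cdE cvE cuE sizeA; lia.
Qed.
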